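(* Let $H_1$ and $H_2$ be finitely generated groups such that $H_2$ is infinite and does not have uniform exponential growth. Then for any constants $\alpha,\beta>0$ there exists a finite generating set $U$ of $H_1\times H_2$ such that $|U^n|<(\alpha|U|)^{\beta n}$ for some $n\in\mathbb{N}$.
   Context: For a finitely generated group $G$ and finite generating set $S$, $B_S(n)$ is the ball of radius $n$ about the identity in the word metric of $S$, $\omega(G,S)=\lim_{n\to\infty}|B_S(n)|^{1/n}$ and $\omega(G)=\inf_S\omega(G,S)$ over finite generating sets; $G$ has uniform exponential growth if $\omega(G)>1$. $U^n=\{u_1\cdots u_n:u_i\in U\}$. *)

From Stdlib Require Import Reals Lra List ClassicalEpsilon.
From Coquelicot Require Import Coquelicot.
Import ListNotations.
Open Scope R_scope.

Record Group := {
  gcar :> Type;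
  gmul : gcar -> gcar -> gcar;
  gone : gcar;
  ginv : gcar -> gcar;
  gmul_assoc : forall x y z, gmul x (gmul y z) = gmul (gmul x y) z;
  gmul_1l : forall x, gmul gone x = x;
  gmul_Vl : forall x, gmul (ginv x) x = gone
}.

Arguments gmul {g}.
Arguments gone {g}.
Arguments ginv {g}.

Definition prod_group (H1 H2 : Group) : Group.
Proof.
refine {| gcar := (gcar H1 * gcar H2)%type;
          gmul := fun x y => (gmul (fst x) (fst y), gmul (snd x) (snd y));
          gone := (gone, gone);
          ginv := fun x => (ginv (fst x), ginv (snd x)) |}.
- intros [a b] [c d] [e f]; simpl; now rewrite !gmul_assoc.
- intros [a b]; simpl; now rewrite !gmul_1l.
- intros [a b]; simpl; now rewrite !gmul_Vl.
Defined.

Definition word_eval {G : Group} (w : list G) : G := fold_right gmul gone w.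

Definition sym_letter {G : Group} (S : list G) (x : G) : Prop :=
  In x S \/ In (ginv x) S.

Definition generates {G : Group} (S : list G) : Prop :=
  forall g : G, exists w : list G,
    (forall x, In x w -> sym_letter S x) /\ word_eval w = g.

Definition finitely_generated (G : Group) : Prop :=
  exists S : list G, generates S.

Definition infinite_group (G : Group) : Prop :=
  ~ exists l : list G, forall x : G, In x l.

(** Cardinality of a finite subset (arbitrary value if the set is infinite). *)
Definition has_card {T : Type} (P : T -> Prop) (k : nat) : Prop :=
  exists l : list T, NoDup l /\ (forall x, In x l <-> P x) /\ length l = k.

Definition card {T : Type} (P : T -> Prop) : nat :=
  epsilon (inhabits 0%nat) (fun k => has_card P k).

Definition ball {G : Group} (S : list G) (n : nat) : G -> Prop :=
  fun g => exists w : list G,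
    (length w <= n)%nat /\ (forall x, In x w -> sym_letter S x) /\ word_eval w = g.

Definition growth_rate {G : Group} (S : list G) : Rbar :=
  Lim_seq (fun n => Rpower (INR (card (ball S n))) (/ INR n)).

Definition uniform_growth_rate (G : Group) : Rbar :=
  Glb_Rbar (fun x => exists S : list G, generates S /\ growth_rate S = Finite x).

Definition has_uniform_exponential_growth (G : Group) : Prop :=
  Rbar_lt (Finite 1) (uniform_growth_rate G).

Definition set_pow {G : Group} (U : list G) (n : nat) : G -> Prop :=
  fun g => exists w : list G,
    length w = n /\ (forall x, In x w -> In x U) /\ word_eval w = g.

Definition list_card {T : Type} (U : list T) : nat := card (fun x => In x U).

(** Fix a finite generating set S1 of H1 and put A = {1} ∪ S1 ∪ S1^-1. Since H2 has
    no uniform exponential growth, for every w > 1 it has a generating set T with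
    |B_T(n)| < w^n for all large n. Take U = A × B_T(m). Then U generates
    H1 × H2, |U| >= |B_T(m)| >= m because H2 is infinite, and
    |U^n| <= |A|^n |B_T(mn)| < |A|^n w^(mn). Choosing m large (depending on |A|,
    alpha, beta only) and then w = 2^(1/m) gives |U^n| < (2|A|)^n <= (alpha |U|)^(beta n). *)

From Stdlib Require Import Reals List Lia Lra FinFun Classical ClassicalEpsilon.
From Coquelicot Require Import Coquelicot.
Import ListNotations.
Open Scope R_scope.

Section GroupFacts.
Variable G : Group.

Lemma gmul_Vr (x : G) : gmul x (ginv x) = gone.
Proof.
  set (y := ginv x).
  rewrite <- (gmul_1l _ (gmul x y)), <- (gmul_Vl _ y) at 1.
  rewrite <- gmul_assoc, (gmul_assoc _ y x y).
  unfold y at 2 3; rewrite gmul_Vl, gmul_1l. apply gmul_Vl.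
Qed.

Lemma gmul_1r (x : G) : gmul x gone = x.
Proof. rewrite <- (gmul_Vl _ x), gmul_assoc, gmul_Vr. apply gmul_1l. Qed.

Lemma ginv_inv (x : G) : ginv (ginv x) = x.
Proof.
  rewrite <- (gmul_1r (ginv (ginv x))), <- (gmul_Vl _ x), gmul_assoc, gmul_Vl.
  apply gmul_1l.
Qed.

Lemma word_eval_app (w1 w2 : list G) :
  word_eval (w1 ++ w2) = gmul (word_eval w1) (word_eval w2).
Proof.
  induction w1 as [|a w1 IH]; simpl; [now rewrite gmul_1l|].
  unfold word_eval in *; simpl. rewrite IH. apply gmul_assoc.
Qed.

Lemma word_eval_const_one {X : Type} (l : list X) :
  word_eval (map (fun _ => gone) l) = gone :> G.
Proof.
  induction l as [|x l IH]; simpl; auto.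
  unfold word_eval in *; simpl. rewrite IH. apply gmul_1l.
Qed.

Definition sym_list (S : list G) : list G := S ++ map ginv S.

Lemma sym_letter_in (S : list G) (x : G) : sym_letter S x -> In x (sym_list S).
Proof.
  intros [Hx|Hx]; apply in_or_app; auto.
  right. rewrite <- (ginv_inv x). now apply in_map.
Qed.

End GroupFacts.

Arguments sym_list {G}.

Section Cardinality.
Context {T : Type}.

Definition finite_pred (P : T -> Prop) : Prop := exists l : list T, forall x, P x -> In x l.

Lemma NoDup_listing_of_cover (l : list T) (P : T -> Prop) :
  (forall x, P x -> In x l) -> exists l', NoDup l' /\ forall x, In x l' <-> P x.
Proof.
  revert P; induction l as [|a l IH]; intros P HP.
  - exists []; split; [constructor|]. intros x; split; [intros []|intros Px; apply (HP x Px)].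
  - destruct (IH (fun x => P x /\ x <> a)) as [l' [Hnd Hl']].
    { intros x [Px Hx]. destruct (HP x Px); [congruence|auto]. }
    destruct (classic (P a)) as [Pa|nPa].
    + exists (a :: l'); split.
      * constructor; auto. intros Hin. apply Hl' in Hin. tauto.
      * intros x; simpl; rewrite Hl'. split; [intros [<-|[? ?]]; auto|].
        intros Px. destruct (classic (a = x)); auto.
    + exists l'; split; auto. intros x; rewrite Hl'. split; [tauto|].
      intros Px; split; auto. intros ->; auto.
Qed.

Lemma card_listing (P : T -> Prop) : finite_pred P ->
  exists l, NoDup l /\ (forall x, In x l <-> P x) /\ length l = card P.
Proof.
  intros [l Hl]. destruct (NoDup_listing_of_cover l P Hl) as [l' [Hnd E]].
  unfold card. apply epsilon_spec. exists (length l'), l'; auto.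
Qed.

Lemma card_le_cover (P : T -> Prop) (l : list T) :
  (forall x, P x -> In x l) -> (card P <= length l)%nat.
Proof.
  intros Hl. destruct (card_listing P) as [l' [Hnd [E <-]]]; [now exists l|].
  apply NoDup_incl_length; auto. intros x Hx; apply Hl, E, Hx.
Qed.

Lemma NoDup_length_le_card (P : T -> Prop) (l : list T) :
  finite_pred P -> NoDup l -> (forall x, In x l -> P x) -> (length l <= card P)%nat.
Proof.
  intros HP Hnd Hl. destruct (card_listing P HP) as [l' [_ [E <-]]].
  apply NoDup_incl_length; auto. intros x Hx; apply E, Hl, Hx.
Qed.

Fixpoint words (A : list T) (n : nat) : list (list T) :=
  match n with
  | O => [[]]
  | S n => flat_map (fun a => map (cons a) (words A n)) A
  end.

Lemma length_words (A : list T) (n : nat) : length (words A n) = (length A ^ n)%nat.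
Proof.
  induction n as [|n IH]; cbn [words]; auto.
  rewrite Nat.pow_succ_r', <- IH. clear IH. generalize (words A n) as W; intros W.
  induction A as [|a A IHA]; cbn [flat_map length]; auto.
  rewrite length_app, length_map, IHA. lia.
Qed.

Lemma in_words (A w : list T) : (forall x, In x w -> In x A) -> In w (words A (length w)).
Proof.
  induction w as [|a w IH]; intros Hw; simpl; auto.
  apply in_flat_map. exists a; split; [apply Hw; simpl; auto|].
  apply in_map, IH. intros x Hx; apply Hw; simpl; auto.
Qed.

End Cardinality.

Section Balls.
Variable G : Group.
Variable S : list G.

Lemma ball_finite (k : nat) : finite_pred (ball S k).
Proof.
  exists (flat_map (fun j => map word_eval (words (sym_list S) j)) (seq 0 (Datatypes.S k))).
  intros g [w [Lw [Hw <-]]]. apply in_flat_map. exists (length w). split.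
  - apply in_seq. lia.
  - apply in_map, in_words. intros x Hx; apply sym_letter_in, Hw, Hx.
Qed.

Lemma ball_one (k : nat) : ball S k gone.
Proof. exists []; repeat split; [simpl; lia|intros x []]. Qed.

Lemma ball_letter (x : G) : sym_letter S x -> ball S 1 x.
Proof.
  intros Hx. exists [x]; split; [simpl; lia|split].
  - intros z [<-|[]]; auto.
  - apply gmul_1r.
Qed.

Lemma ball_le (k k' : nat) (g : G) : (k <= k')%nat -> ball S k g -> ball S k' g.
Proof. intros Hk [w [Lw Hw]]. exists w; split; [lia|auto]. Qed.

Lemma ball_mul (a b : nat) (x y : G) : ball S a x -> ball S b y -> ball S (a + b) (gmul x y).
Proof.
  intros [w1 [L1 [H1 <-]]] [w2 [L2 [H2 <-]]]. exists (w1 ++ w2); repeat split.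
  - rewrite length_app; lia.
  - intros z Hz; apply in_app_or in Hz; destruct Hz; auto.
  - apply word_eval_app.
Qed.

Lemma ball_stable (k : nat) : (forall g, ball S (Datatypes.S k) g -> ball S k g) ->
  forall j g, ball S j g -> ball S k g.
Proof.
  intros Hstable j; induction j as [|j IH]; intros g [w [Lw [Hw <-]]].
  - destruct w; simpl in Lw; [apply ball_one|lia].
  - destruct w as [|x w]; [apply ball_one|].
    apply Hstable, (ball_mul 1 k x (word_eval w)).
    + apply ball_letter, Hw; simpl; auto.
    + apply IH. exists w; repeat split; [simpl in Lw; lia|]. intros z Hz; apply Hw; simpl; auto.
Qed.

Lemma ball_card_1 (k : nat) : (1 <= card (ball S k))%nat.
Proof.
  apply (NoDup_length_le_card _ [gone]); [apply ball_finite|repeat constructor; auto|].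
  intros y [<-|[]]; apply ball_one.
Qed.

Hypothesis S_generates : generates S.
Hypothesis G_infinite : infinite_group G.

Lemma ball_grows (k : nat) : exists g, ball S (Datatypes.S k) g /\ ~ ball S k g.
Proof.
  apply NNPP; intros Hno.
  assert (Hstable : forall g, ball S (Datatypes.S k) g -> ball S k g).
  { intros g Hg. apply NNPP; intros Hng. apply Hno; exists g; auto. }
  apply G_infinite. destruct (ball_finite k) as [l Hl]. exists l; intros x.
  destruct (S_generates x) as [w [Hw Ew]]. apply Hl, (ball_stable k Hstable (length w)).
  exists w; auto.
Qed.

Lemma ball_card_ge (k : nat) : (k <= card (ball S k))%nat.
Proof.
  induction k as [|k IH]; [lia|].
  destruct (ball_grows k) as [g [Hg Hng]].
  destruct (card_listing (ball S k) (ball_finite k)) as [l [Hnd [E L]]].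
  enough (length (g :: l) <= card (ball S (Datatypes.S k)))%nat by (simpl in *; lia).
  apply NoDup_length_le_card; [apply ball_finite| |].
  - constructor; auto. intros Hin; apply Hng, E, Hin.
  - intros x [<-|Hx]; auto. apply (ball_le k); [lia|apply E, Hx].
Qed.

End Balls.

Section SetPow.
Variable G : Group.

Lemma set_pow_in_words (A : list G) (n : nat) (g : G) :
  set_pow A n g -> In g (map word_eval (words A n)).
Proof. intros [w [<- [Hw <-]]]. apply in_map, in_words, Hw. Qed.

Lemma set_pow_ball (S B : list G) (m n : nat) (g : G) :
  (forall y, In y B -> ball S m y) -> set_pow B n g -> ball S (m * n) g.
Proof.
  intros HB [w [<- [Hw <-]]]. induction w as [|y w IH]; simpl length.
  - rewrite Nat.mul_0_r. apply ball_one.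
  - rewrite Nat.mul_succ_r, Nat.add_comm. apply ball_mul.
    + apply HB, Hw; simpl; auto.
    + apply IH. intros z Hz; apply Hw; simpl; auto.
Qed.

End SetPow.

Section Product.
Variables H1 H2 : Group.

Lemma word_eval_prod (w : list (prod_group H1 H2)) :
  word_eval w = (word_eval (map fst w), word_eval (map snd w)).
Proof.
  induction w as [|[a b] w IH]; [reflexivity|].
  change (word_eval (G := prod_group H1 H2) ((a, b) :: w))
    with (gmul (g := prod_group H1 H2) (a, b) (word_eval w)).
  rewrite IH. reflexivity.
Qed.

Lemma generates_list_prod (S1 A : list H1) (S2 B : list H2) :
  generates S1 -> generates S2 -> In gone A -> In gone B ->
  (forall x, sym_letter S1 x -> In x A) -> (forall y, sym_letter S2 y -> In y B) ->
  generates (G := prod_group H1 H2) (list_prod A B).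
Proof.
  intros HS1 HS2 HA HB HA1 HB2 [h1 h2].
  destruct (HS1 h1) as [w1 [Hw1 <-]], (HS2 h2) as [w2 [Hw2 <-]].
  exists (map (fun x => (x, gone)) w1 ++ map (fun y => (gone, y)) w2). split.
  - intros z Hz. left. apply in_app_or in Hz.
    destruct Hz as [Hz|Hz]; apply in_map_iff in Hz; destruct Hz as [x [<- Hx]];
      apply in_prod_iff; auto.
  - rewrite word_eval_prod, !map_app, !map_map, !word_eval_app, !word_eval_const_one,
      !map_id, gmul_1r, gmul_1l.
    reflexivity.
Qed.

Lemma length_le_list_card_prod (A : list H1) (B : list H2) :
  In gone A -> NoDup B -> (length B <= list_card (list_prod A B))%nat.
Proof.
  intros HA Hnd. unfold list_card.
  rewrite <- (length_map (fun y => (gone, y) : prod_group H1 H2)).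
  apply NoDup_length_le_card.
  - exists (list_prod A B); auto.
  - apply Injective_map_NoDup; auto. intros x y E; now injection E.
  - intros z Hz. apply in_map_iff in Hz. destruct Hz as [y [<- Hy]]. apply in_prod_iff; auto.
Qed.

Lemma set_pow_list_prod (A : list H1) (B : list H2) (n : nat) (x : H1) (y : H2) :
  set_pow (G := prod_group H1 H2) (list_prod A B) n (x, y) -> set_pow A n x /\ set_pow B n y.
Proof.
  intros [w [Lw [Hw Ew]]]. rewrite word_eval_prod in Ew. injection Ew as <- <-.
  split; [exists (map fst w)|exists (map snd w)]; rewrite length_map;
    repeat split; auto; intros z Hz; apply in_map_iff in Hz;
    destruct Hz as [[a b] [<- Hab]]; apply Hw, in_prod_iff in Hab; apply Hab.
Qed.

Lemma card_set_pow_list_prod_le (A : list H1) (S B : list H2) (m n : nat) :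
  (forall y, In y B -> ball S m y) ->
  (card (set_pow (G := prod_group H1 H2) (list_prod A B) n)
     <= length A ^ n * card (ball S (m * n)))%nat.
Proof.
  intros HB.
  destruct (card_listing (ball S (m * n)) (ball_finite H2 S (m * n))) as [l [_ [E <-]]].
  rewrite <- (length_words A n), <- (length_map word_eval (words A n)), <- length_prod.
  apply card_le_cover. intros [x y] Hxy. apply set_pow_list_prod in Hxy as [Hx Hy].
  apply in_prod_iff; split.
  - now apply set_pow_in_words.
  - now apply E, (set_pow_ball H2 S B).
Qed.

End Product.

Lemma not_uniform_exponential_growth_small_rate (G : Group) :
  ~ has_uniform_exponential_growth G ->
  forall r, 1 < r -> exists S : list G, exists x, generates S /\ growth_rate S = Finite x /\ x < r.
Proof.
  intros NU r Hr. apply NNPP; intros Hno. apply NU.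
  unfold has_uniform_exponential_growth, uniform_growth_rate.
  set (E := fun x => exists S : list G, generates S /\ growth_rate S = Finite x).
  assert (Hlb : Rbar_le (Finite r) (Glb_Rbar E)).
  { apply Glb_Rbar_correct. intros x [S [HS Hx]]. simpl. apply Rnot_lt_le.
    intros Hxr. apply Hno. exists S, x; auto. }
  destruct (Glb_Rbar E); simpl in *; auto; lra.
Qed.

(* [Lim_seq] is the mean of [LimSup_seq] and [LimInf_seq] even when [u] diverges, so a
   finite [Lim_seq] bounds [LimSup_seq] only via the lower bound [b] of [u]. *)
Lemma eventually_lt_of_Lim_seq (u : nat -> R) (b x y : R) :
  (forall n, b <= u n) -> Lim_seq u = Finite x -> 2 * x - b < y ->
  exists N, forall n, (N <= n)%nat -> u n < y.
Proof.
  intros Hb Hlim Hy.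
  assert (Hinf : Rbar_le (Finite b) (LimInf_seq u)).
  { rewrite <- (LimInf_seq_const b). apply LimInf_le. exists 0%nat; auto. }
  assert (Hle := LimSup_LimInf_seq_le u).
  unfold Lim_seq in Hlim.
  destruct (ex_LimSup_seq u) as [ls Hls]. rewrite (is_LimSup_seq_unique u ls Hls) in Hlim, Hle.
  destruct ls as [l| |], (LimInf_seq u) as [a| |]; simpl in Hlim, Hle, Hinf;
    try discriminate; try contradiction.
  injection Hlim as Hlim.
  assert (Heps : 0 < y - l) by lra.
  destruct (Hls (mkposreal _ Heps)) as [_ [N HN]]. exists N; intros n Hn.
  specialize (HN n Hn). simpl in HN. lra.
Qed.

Lemma Rpower_inv_lt_pow (a w : R) (n : nat) :
  0 < a -> (0 < n)%nat -> Rpower a (/ INR n) < w -> a < w ^ n.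
Proof.
  intros Ha Hn Hw.
  assert (Hn' : 0 < INR n) by (apply lt_0_INR; lia).
  assert (Hpos : 0 < Rpower a (/ INR n)) by apply exp_pos.
  rewrite <- Rpower_pow by lra.
  replace a with (Rpower (Rpower a (/ INR n)) (INR n))
    by (rewrite Rpower_mult, Rinv_l by lra; apply Rpower_1; lra).
  apply Rlt_Rpower_l; lra.
Qed.

Lemma small_growth_generating_set (G : Group) :
  ~ has_uniform_exponential_growth G ->
  forall w, 1 < w -> exists T : list G, generates T /\
    exists N, forall n, (N < n)%nat -> INR (card (ball T n)) < w ^ n.
Proof.
  intros NU w Hw.
  destruct (not_uniform_exponential_growth_small_rate G NU ((1 + w) / 2)) as [T [x [HT [Hx Hxw]]]];
    [lra|].
  exists T; split; auto.
  assert (Hcard : forall n, 1 <= INR (card (ball T n)))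
    by (intros n; apply (le_INR 1), ball_card_1).
  destruct (eventually_lt_of_Lim_seq (fun n => Rpower (INR (card (ball T n))) (/ INR n)) 1 x w)
    as [N HN]; auto; try lra.
  { intros n. rewrite <- (Rpower_O (INR (card (ball T n)))) by (specialize (Hcard n); lra).
    apply Rle_Rpower; auto. destruct n; [simpl; rewrite Rinv_0; lra|].
    left; apply Rinv_0_lt_compat, lt_0_INR; lia. }
  exists N; intros n Hn. apply Rpower_inv_lt_pow; [specialize (Hcard n); lra|lia|].
  apply HN; lia.
Qed.

Lemma growth_budget (c alpha beta : R) :
  0 < c -> 0 < alpha -> 0 < beta ->
  exists m : nat, (0 < m)%nat /\ exists w, 1 < w /\
    forall (M B : R) (n : nat), INR m <= M -> B < w ^ (m * n) ->
      c ^ n * B < Rpower (alpha * M) (beta * INR n).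
Proof.
  intros Hc Ha Hb.
  set (K := Rpower (2 * c) (/ beta)).
  destruct (INR_unbounded (K / alpha)) as [m0 Hm0].
  exists (S m0); split; [lia|].
  assert (Hm : 0 < INR (S m0)) by (apply lt_0_INR; lia).
  exists (Rpower 2 (/ INR (S m0))). split.
  { rewrite <- (Rpower_O 2) at 1 by lra. apply Rpower_lt; [lra|]. now apply Rinv_0_lt_compat. }
  intros M B n HM HB.
  assert (Hw : Rpower 2 (/ INR (S m0)) ^ (S m0 * n) = 2 ^ n).
  { rewrite pow_mult, <- (Rpower_pow (S m0)) by apply exp_pos.
    rewrite Rpower_mult, Rinv_l, Rpower_1; lra. }
  assert (HK : 2 * c <= Rpower (alpha * M) beta).
  { replace (2 * c) with (Rpower K beta)
      by (unfold K; rewrite Rpower_mult, Rinv_l by lra; apply Rpower_1; lra).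
    apply Rle_Rpower_l; [lra|split; [apply exp_pos|]].
    rewrite S_INR in HM.
    apply Rmult_lt_compat_l with (r := alpha) in Hm0; auto.
    replace (alpha * (K / alpha)) with K in Hm0 by (field; lra). nra. }
  rewrite Hw in HB.
  rewrite <- Rpower_mult, Rpower_pow by (apply exp_pos).
  apply Rlt_le_trans with ((2 * c) ^ n).
  - rewrite Rpow_mult_distr, Rmult_comm. apply Rmult_lt_compat_r; auto. now apply pow_lt.
  - apply pow_incr. lra.
Qed.

Theorem proposition2p14 (H1 H2 : Group) :
  finitely_generated H1 ->
  finitely_generated H2 ->
  infinite_group H2 ->
  ~ has_uniform_exponential_growth H2 ->
  forall alpha beta : R, 0 < alpha -> 0 < beta ->
  exists U : list (prod_group H1 H2),
    generates U /\
    exists n : nat, (0 < n)%nat /\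
      INR (card (set_pow U n)) <
      Rpower (alpha * INR (list_card U)) (beta * INR n).
Proof.
  intros [S1 HS1] _ Hinf NU alpha beta Ha Hb.
  set (A := gone :: sym_list S1).
  destruct (growth_budget (INR (length A)) alpha beta) as [m [Hm [w [Hw Hbudget]]]];
    auto; [apply lt_0_INR, Nat.lt_0_succ|].
  destruct (small_growth_generating_set H2 NU w Hw) as [T [HT [N HN]]].
  destruct (card_listing (ball T m) (ball_finite H2 T m)) as [B [HB [EB LB]]].
  exists (list_prod A B). split.
  - apply (generates_list_prod H1 H2 S1 A T B); auto.
    + now left.
    + apply EB, ball_one.
    + intros x Hx. right. now apply sym_letter_in.
    + intros y Hy. apply EB, (ball_le H2 T 1); [lia|now apply ball_letter].
  - exists (S N). split; [lia|].
    eapply Rle_lt_trans.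
    { apply le_INR, (card_set_pow_list_prod_le H1 H2 A T B m (S N)).
      intros y Hy; now apply EB. }
    rewrite mult_INR, pow_INR. apply Hbudget.
    + apply le_INR, (Nat.le_trans _ _ _ (ball_card_ge H2 T HT Hinf m)).
      rewrite <- LB. apply length_le_list_card_prod; auto. now left.
    + apply HN. nia.
Qed.
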